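(* Let $(J,|\cdot|)$ be a graded index set, $(\omega_k)_{k\in\mathbb{N}}$ a convex growth family and $B$ a Banach space. Then the direct limit $\ell^\infty_{\rightarrow}(J,B)$ is compactly regular: for every compact set $K\subseteq\ell^\infty_{\rightarrow}(J,B)$ there is $k\in\mathbb{N}$ such that $K$ is a compact subset of $\ell^\infty_k(J,B)$.
   Context: A graded index set is a set $J$ with a map $|\cdot|\colon J\to\mathbb{N}_0$. Growth family $(\omega_k)_{k\in\mathbb{N}}$, $\omega_k\colon\mathbb{N}_0\to\mathbb{N}$: (W1) $\omega_k(0)=1$, $\omega_k(n)\le\omega_{k+1}(n)$; (W2) $\omega_k(n)\omega_k(m)\le\omega_k(n+m)$; (W3) for each $k_1$ some $k_2\ge k_1$ with $\omega_{k_2}(n)\ge2^n\omega_{k_1}(n)$ for all $n$; convex: $k_2$ can be chosen so that for each $k_3\ge k_2$ some $\alpha\in]0,1[$ gives $\omega_{k_1}(n)^\alpha\omega_{k_3}(n)^{1-\alpha}\le\omega_{k_2}(n)$ for all $n$. $\ell^\infty_k(J,B)$ is the Banach space of $f\colon J\to B$ with $\|f\|_{\ell^\infty_k}=\sup_\tau\|f(\tau)\|/\omega_k(|\tau|)<\infty$; $\ell^\infty_{\rightarrow}(J,B)=\bigcup_k\ell^\infty_k(J,B)$ with the locally convex direct limit topology. *)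

From HB Require Import structures.
From mathcomp Require Import all_boot all_order all_algebra.
From mathcomp Require Import all_classical all_reals all_analysis.
Set Implicit Arguments. Unset Strict Implicit. Unset Printing Implicit Defensive.
Import Order.TTheory GRing.Theory Num.Theory.
Import numFieldNormedType.Exports.
Local Open Scope classical_set_scope.
Local Open Scope ring_scope.

Definition growth_family (om : nat -> nat -> nat) : Prop :=
  [/\ (forall k n, (0 < om k n)%N),
      (forall k, om k 0%N = 1%N) /\ (forall k n, (om k n <= om k.+1 n)%N),
      (forall k n m, (om k n * om k m <= om k (n + m))%N)
    & (forall k1, exists k2, (k1 <= k2)%N /\
         forall n, (2 ^ n * om k1 n <= om k2 n)%N)].                        (* W3 *)

Definition convex_growth_family (R : realType) (om : nat -> nat -> nat) : Prop :=
  growth_family om /\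
  forall k1, exists k2, [/\ (k1 <= k2)%N,
     (forall n, (2 ^ n * om k1 n <= om k2 n)%N)
   & forall k3, (k2 <= k3)%N -> exists alpha : R, 0 < alpha < 1 /\
       forall n, ((om k1 n)%:R `^ alpha) * ((om k3 n)%:R `^ (1 - alpha))
                   <= (om k2 n)%:R :> R].

Section Spaces.
Variables (R : realType) (B : normedModType R) (J : Type) (deg : J -> nat)
          (om : nat -> nat -> nat).

Definition wvals (k : nat) (f : J -> B) : set R :=
  [set `|f t| / (om k (deg t))%:R | t in [set: J]].

Definition wnorm (k : nat) (f : J -> B) : R := sup (wvals k f).

Definition ell_k (k : nat) : set (J -> B) := [set f | has_ubound (wvals k f)].

Definition ell_lim : set (J -> B) := [set f | exists k, ell_k k f].

Definition fsub (f g : J -> B) : J -> B := fun t => f t - g t.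

(* continuous seminorms of the locally convex direct limit: seminorms on
   l^oo_-> whose restriction to every step l^oo_k is continuous *)
Definition lim_seminorm (p : (J -> B) -> R) : Prop :=
  [/\ (forall f, ell_lim f -> 0 <= p f),
      (forall f g, ell_lim f -> ell_lim g -> p (fun t => f t + g t) <= p f + p g),
      (forall (a : R) f, ell_lim f -> p (fun t => a *: f t) = `|a| * p f)
    & (forall k, exists C : R, forall f, ell_k k f -> p f <= C * wnorm k f)].

(* open sets of the locally convex direct limit topology on l^oo_-> *)
Definition lim_open (U : set (J -> B)) : Prop :=
  U `<=` ell_lim /\
  forall f, U f -> exists p, lim_seminorm p /\ exists2 e : R, 0 < e &
      [set g | ell_lim g /\ p (fsub g f) < e] `<=` U.

Definition ellk_open (k : nat) (U : set (J -> B)) : Prop :=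
  U `<=` ell_k k /\
  forall f, U f -> exists2 e : R, 0 < e &
      [set g | ell_k k g /\ wnorm k (fsub g f) < e] `<=` U.

End Spaces.

Definition compact_wrt (T : Type) (isopen : set T -> Prop) (K : set T) : Prop :=
  forall (I : Type) (U : I -> set T), (forall i, isopen (U i)) ->
    K `<=` \bigcup_i U i ->
    exists2 D : set I, finite_set D & K `<=` \bigcup_(i in D) U i.

From HB Require Import structures.
From mathcomp Require Import all_boot all_order all_algebra.
From mathcomp Require Import all_classical all_reals all_analysis.
From mathcomp Require Import lra.
Set Implicit Arguments. Unset Strict Implicit. Unset Printing Implicit Defensive.
Import Order.TTheory GRing.Theory Num.Theory.
Import numFieldNormedType.Exports.
Local Open Scope classical_set_scope.
Local Open Scope ring_scope.

(* A compact set K of the direct limit is bounded for every continuous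
   seminorm.  If K lay in no bounded set of a single step, choosing f_k in K and
   t_k with |f_k(t_k)| > k om_k(|t_k|) would give the continuous seminorm
   sup_k |h(t_k)| / om_k(|t_k|), unbounded on K.  So K is bounded in some
   l^oo_k1; let k2 be given by (W3) for k1.  On a bounded subset of l^oo_k1 the
   l^oo_k2-distance is, up to an error 2^-N, the supremum over the finitely many
   degrees |t| < N, which is a continuous seminorm of the direct limit.  Hence
   on K the l^oo_k2-topology is coarser than the direct-limit topology, and K
   stays compact. *)

Lemma sup_le_nonneg {R : realType} (A : set R) (y : R) :
  0 <= y -> (forall x, A x -> x <= y) -> sup A <= y.
Proof.
move=> y_ge0 Ay; have [->|/set0P A_neq0] := eqVneq A set0; first by rewrite sup0.
by apply: ge_sup => // x /Ay.
Qed.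

Lemma sup_nonneg {R : realType} (A : set R) :
  has_ubound A -> (forall x, A x -> 0 <= x) -> 0 <= sup A.
Proof.
move=> A_ub A_ge0; have [->|/set0P [x Ax]] := eqVneq A set0; first by rewrite sup0.
exact: le_trans (A_ge0 _ Ax) (ub_le_sup A_ub Ax).
Qed.

Lemma sup_scale {R : realType} (A : set R) (c : R) :
  0 <= c -> (forall x, A x -> 0 <= x) -> has_ubound A ->
  sup [set c * x | x in A] = c * sup A.
Proof.
move=> c_ge0 A_ge0 A_ub.
have cA_ge0 y : [set c * x | x in A] y -> 0 <= y.
  by move=> [x Ax <-]; exact: mulr_ge0 c_ge0 (A_ge0 _ Ax).
have cA_ub : has_ubound [set c * x | x in A].
  by case: A_ub => M AM; exists (c * M) => _ [x Ax <-]; rewrite ler_wpM2l // AM.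
apply/le_anti/andP; split.
  apply: sup_le_nonneg => [|_ [x Ax <-]]; first by rewrite mulr_ge0 ?sup_nonneg.
  by rewrite ler_wpM2l // ub_le_sup.
have [c0|c_neq0] := eqVneq c 0; first by rewrite {1}c0 mul0r sup_nonneg.
have c_gt0 : 0 < c by rewrite lt_def c_neq0.
rewrite mulrC -ler_pdivlMr //; apply: sup_le_nonneg => [|x Ax].
  by rewrite divr_ge0 ?sup_nonneg ?ltW.
by rewrite ler_pdivlMr // mulrC ub_le_sup //; exists x.
Qed.

Lemma ler_wpdiv2l {R : numFieldType} (x a b : R) :
  0 <= x -> 0 < a -> a <= b -> x / b <= x / a.
Proof.
by move=> x_ge0 a_gt0 ab; rewrite ler_wpM2l // lef_pV2 // posrE (lt_le_trans a_gt0).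
Qed.

(* The hypothesis says that the identity of [K] is continuous from [op1]
   to [op2]. *)
Lemma compact_wrt_coarser (T : Type) (op1 op2 : set T -> Prop) (K : set T) :
  (forall U f, op2 U -> K f -> U f -> exists2 V, op1 V & V f /\ K `&` V `<=` U) ->
  compact_wrt op1 K -> compact_wrt op2 K.
Proof.
move=> refine K_compact I U U_open K_cover.
have [->|/set0P [f0 Kf0]] := eqVneq K set0; first by exists set0.
have nbhs_in f : K f -> exists Vi : set T * I,
    [/\ op1 Vi.1, Vi.1 f & K `&` Vi.1 `<=` U Vi.2].
  move=> Kf; have [i _ Uif] := K_cover f Kf.
  by have [V V_open [Vf KV]] := refine _ _ (U_open i) Kf Uif; exists (V, i).
have nbhs f : exists Vi : set T * I,
    [/\ op1 Vi.1, K f -> Vi.1 f & K `&` Vi.1 `<=` U Vi.2].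
  have [Kf|nKf] := pselect (K f).
    by have [Vi [? ? ?]] := nbhs_in f Kf; exists Vi.
  by have [Vi [? ? ?]] := nbhs_in f0 Kf0; exists Vi.
have [Vi HVi] := choice nbhs.
have V_open f : op1 (Vi f).1 by case: (HVi f).
have K_coverV : K `<=` \bigcup_f (Vi f).1.
  by move=> f Kf; exists f => //; have [_ + _] := HVi f; apply.
have [D D_fin KD] := K_compact T _ V_open K_coverV.
exists ((fun f => (Vi f).2) @` D); first exact: finite_image.
move=> g Kg; have [f Df Vfg] := KD g Kg.
have [_ _ KVU] := HVi f.
by exists (Vi f).2; [exists f | apply: KVU].
Qed.

Section DirectLimit.
Variables (R : realType) (B : normedModType R) (J : Type) (deg : J -> nat)
  (om : nat -> nat -> nat).
Hypothesis om_gt0 : forall k n, (0 < om k n)%N.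
Hypothesis om_leS : forall k n, (om k n <= om k.+1 n)%N.

Local Notation w k t := ((om k (deg t))%:R : R).
Local Notation ell_k := (ell_k deg om (B := B)).
Local Notation ell_lim := (ell_lim deg om (B := B)).
Local Notation wnorm := (wnorm deg om (B := B)).

Lemma w_gt0 k t : 0 < w k t. Proof. by rewrite ltr0n. Qed.

Lemma om_le m k n : (m <= k)%N -> (om m n <= om k n)%N.
Proof. exact: (homo_leq (f := om^~ n) leqnn leq_trans). Qed.

Lemma ell_kP k (f : J -> B) :
  ell_k k f <-> exists M, forall t, `|f t| / w k t <= M.
Proof.
split=> [[M fM]|[M fM]]; last by exists M => _ [t _ <-].
by exists M => t; apply: fM; exists t.
Qed.

Lemma wnorm_ge k (f : J -> B) t : ell_k k f -> `|f t| / w k t <= wnorm k f.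
Proof. by move=> f_ub; apply: ub_le_sup; [exact: f_ub | exists t]. Qed.

Lemma wnorm_ge0 k (f : J -> B) : ell_k k f -> 0 <= wnorm k f.
Proof.
by move=> f_ub; apply: sup_nonneg f_ub _ => _ [t _ <-]; rewrite divr_ge0 ?ler0n.
Qed.

Lemma wnorm_le k (f : J -> B) M :
  0 <= M -> (forall t, `|f t| / w k t <= M) -> wnorm k f <= M.
Proof. by move=> M_ge0 fM; apply: sup_le_nonneg => // _ [t _ <-]. Qed.

Lemma ell_k_weaker k k' (f : J -> B) :
  (forall n, (om k n <= om k' n)%N) -> ell_k k f -> ell_k k' f.
Proof.
move=> om_kk' /ell_kP [M fM]; apply/ell_kP; exists M => t.
by apply: le_trans (fM t); rewrite ler_wpdiv2l ?w_gt0 ?ler_nat.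
Qed.

Lemma ell_k_le k k' (f : J -> B) : (k <= k')%N -> ell_k k f -> ell_k k' f.
Proof. by move=> kk'; apply: ell_k_weaker => n; apply: om_le. Qed.

Lemma ell_k_sub k (f g : J -> B) : ell_k k f -> ell_k k g -> ell_k k (fsub f g).
Proof.
move=> /ell_kP [M fM] /ell_kP [N gN]; apply/ell_kP; exists (M + N) => t.
apply: le_trans (_ : (`|f t| + `|g t|) / w k t <= _).
  by rewrite ler_wpM2r ?invr_ge0 ?ler0n ?ler_normB.
by rewrite mulrDl lerD.
Qed.

Lemma ell_lim_sub (f g : J -> B) : ell_lim f -> ell_lim g -> ell_lim (fsub f g).
Proof.
move=> [k fk] [k' gk']; exists (maxn k k').
by apply: ell_k_sub; apply: ell_k_le; [exact: leq_maxl | | exact: leq_maxr |].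
Qed.

Lemma ell_lim0 : ell_lim (fun _ => 0).
Proof. by exists 0%N; apply/ell_kP; exists 0 => t; rewrite normr0 mul0r. Qed.

Lemma fsubr0 (f : J -> B) : fsub f (fun _ => 0) = f.
Proof. by apply/funext => t; rewrite /fsub subr0. Qed.

Lemma lim_open_ball p (f : J -> B) e : lim_seminorm deg om p -> ell_lim f ->
  lim_open deg om [set g | ell_lim g /\ p (fsub g f) < e].
Proof.
move=> p_semi Lf; have [_ p_triangle _ _] := p_semi.
split=> [g [] //|g [Lg pg]]; exists p; split=> //.
exists (e - p (fsub g f)); first by rewrite subr_gt0.
move=> h [Lh ph]; split=> //.
have -> : fsub h f = (fun t => fsub h g t + fsub g f t).
  by apply/funext => t; rewrite /fsub addrA subrK.
apply: le_lt_trans (p_triangle _ _ (ell_lim_sub Lh Lg) (ell_lim_sub Lg Lf)) _.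
by rewrite -ltrBrDr.
Qed.

Lemma lim_compact_seminorm_bounded (K : set (J -> B)) p :
  K `<=` ell_lim -> compact_wrt (lim_open deg om) K -> lim_seminorm deg om p ->
  exists C, forall f, K f -> p f <= C.
Proof.
move=> KL K_compact p_semi.
have [D /finite_seqP [s ->] KD] := K_compact nat
  (fun n => [set g | ell_lim g /\ p (fsub g (fun _ => 0)) < n%:R])
  (fun n => lim_open_ball n%:R p_semi ell_lim0)
  (fun f Kf => ex_intro2 _ _ _ I (conj (KL f Kf) (truncnS_gt _))).
exists (\max_(n <- s) n)%:R => f Kf.
have [n sn [_]] := KD f Kf; rewrite fsubr0 => /ltW /le_trans; apply.
by rewrite ler_nat (leq_bigmax_seq (F := id) n sn).
Qed.

Definition sampled_sup (S : set (J * nat)) (h : J -> B) : R :=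
  sup [set `|h s.1| / w s.2 s.1 | s in S].

Definition low_levels_bounded_deg (S : set (J * nat)) : Prop :=
  forall m, exists d, forall s, S s -> (s.2 < m)%N -> (deg s.1 < d)%N.

Section SampledSup.
Variable S : set (J * nat).
Hypothesis S_low : low_levels_bounded_deg S.

(* Samples of level [>= m] are dominated by [om_m] itself; those of lower
   level have boundedly many degrees, where [om_m] is bounded. *)
Lemma sampled_le_wnorm m : exists2 C : R, 0 <= C & forall h s, ell_k m h -> S s ->
  `|h s.1| / w s.2 s.1 <= C * wnorm m h.
Proof.
have [d Sd] := S_low m; pose C := maxn 1 (\max_(n < d) om m n).
exists C%:R => // h [t k] hm /= Skt.
have ratio_le : w m t / w k t <= C%:R.
  rewrite ler_pdivrMr ?w_gt0 //; have [mk|km] := leqP m k.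
    apply: le_trans (_ : 1 * w k t <= _); first by rewrite mul1r ler_nat om_le.
    by rewrite ler_wpM2r ?ler0n // ler1n leq_maxl.
  apply: le_trans (_ : C%:R * 1 <= _); last by rewrite ler_wpM2l ?ler1n.
  rewrite mulr1 ler_nat (leq_trans _ (leq_maxr 1 _)) //.
  exact: (leq_bigmax (F := fun n : 'I_d => om m n) (Ordinal (Sd _ Skt km))).
have -> : `|h t| / w k t = w m t / w k t * (`|h t| / w m t).
  by rewrite [RHS]mulrC mulrA divfK // gt_eqF ?w_gt0.
by rewrite ler_pM ?divr_ge0 ?ler0n ?wnorm_ge.
Qed.

Lemma sampled_ubound h : ell_lim h -> has_ubound [set `|h s.1| / w s.2 s.1 | s in S].
Proof.
move=> [m hm]; have [C _ HC] := sampled_le_wnorm m.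
by exists (C * wnorm m h) => _ [s Ss <-]; exact: HC.
Qed.

Lemma sampled_sup_ge h s : ell_lim h -> S s -> `|h s.1| / w s.2 s.1 <= sampled_sup S h.
Proof. by move=> Lh Ss; apply: ub_le_sup; [exact: sampled_ubound | exists s]. Qed.

Lemma sampled_sup_ge0 h : ell_lim h -> 0 <= sampled_sup S h.
Proof.
move=> Lh; apply: sup_nonneg (sampled_ubound Lh) _ => _ [s _ <-].
by rewrite divr_ge0 ?ler0n.
Qed.

Lemma sampled_sup_seminorm : lim_seminorm deg om (sampled_sup S).
Proof.
split; first exact: sampled_sup_ge0.
- move=> f g Lf Lg; apply: sup_le_nonneg => [|_ [s Ss <-]].
    by rewrite addr_ge0 ?sampled_sup_ge0.
  apply: le_trans (_ : (`|f s.1| + `|g s.1|) / w s.2 s.1 <= _).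
    by rewrite ler_wpM2r ?invr_ge0 ?ler0n ?ler_normD.
  by rewrite mulrDl lerD ?sampled_sup_ge.
- move=> a f Lf; rewrite /sampled_sup -sup_scale //; last 2 first.
  + by move=> _ [s _ <-]; rewrite divr_ge0 ?ler0n.
  + exact: sampled_ubound.
  by congr sup; rewrite image_comp; apply: eq_imagel => s _ /=; rewrite normrZ mulrA.
- move=> m; have [C C_ge0 HC] := sampled_le_wnorm m; exists C => f fm.
  by apply: sup_le_nonneg => [|_ [s Ss <-]]; rewrite ?mulr_ge0 ?wnorm_ge0 ?HC.
Qed.

End SampledSup.

Lemma lim_compact_step_bounded (K : set (J -> B)) :
  K `<=` ell_lim -> compact_wrt (lim_open deg om) K ->
  exists k (M : R), forall f t, K f -> `|f t| / w k t <= M.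
Proof.
move=> KL K_compact; apply: contrapT => unbounded.
have witness k : exists ft : (J -> B) * J, K ft.1 /\ k%:R < `|ft.1 ft.2| / w k ft.2.
  apply: contrapT => none; apply: unbounded; exists k, k%:R => f t Kf.
  by rewrite leNgt; apply/negP => lt_k; apply: none; exists (f, t).
have [F HF] := choice witness.
pose S := [set ((F k).2, k) | k in [set: nat]].
have S_low : low_levels_bounded_deg S.
  move=> m; exists (\max_(k < m) deg (F k).2).+1 => _ [k _ <-] /= km.
  by rewrite ltnS (leq_bigmax (F := fun k : 'I_m => deg (F k).2) (Ordinal km)).
have [C KC] := lim_compact_seminorm_bounded KL K_compact (sampled_sup_seminorm S_low).
pose N := (Num.truncn C).+1; have [KfN ltN] := HF N.
have SN : S ((F N).2, N) by exists N.
have := sampled_sup_ge S_low (KL _ KfN) SN; have := KC _ KfN.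
have := truncnS_gt C; rewrite -/N /=; lra.
Qed.

Definition head_sample k N : set (J * nat) :=
  [set (t, k) | t in [set t | (deg t < N)%N]].

Lemma head_sample_low k N : low_levels_bounded_deg (head_sample k N).
Proof. by move=> m; exists N => _ [t tN <-]. Qed.

(* Beyond degree [N], (W3) makes the [om_k2]-weighted values [2^N] times smaller
   than the [om_k1]-weighted ones. *)
Lemma wnorm_head_tail k1 k2 (h : J -> B) (M : R) N :
  (forall n, (2 ^ n * om k1 n <= om k2 n)%N) ->
  (forall t, `|h t| / w k1 t <= M) ->
  wnorm k2 h <= Num.max (sampled_sup (head_sample k2 N) h) (M / (2 ^ N)%:R).
Proof.
move=> om_k12 hM; have Lh : ell_lim h by exists k1; apply/ell_kP; exists M.
have p_ge0 := sampled_sup_ge0 (head_sample_low k2 N) Lh.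
apply: wnorm_le => [|t]; first by rewrite le_max p_ge0.
rewrite le_max; apply/orP; have [tN|Nt] := ltnP (deg t) N.
  by left; apply: (sampled_sup_ge (head_sample_low k2 N) Lh (s := (t, k2))); exists t.
right; apply: le_trans (_ : `|h t| / ((2 ^ N)%:R * w k1 t) <= _).
  rewrite ler_wpdiv2l ?mulr_gt0 ?w_gt0 ?ltr0n ?expn_gt0 // -natrM ler_nat.
  by apply: leq_trans (om_k12 _); rewrite leq_mul2r leq_pexp2l ?orbT.
by rewrite [_ * w k1 t]mulrC invfM mulrA ler_wpM2r ?invr_ge0 ?ler0n.
Qed.

Lemma lim_compact_in_step (K : set (J -> B)) k1 k2 (M : R) :
  (forall n, (2 ^ n * om k1 n <= om k2 n)%N) ->
  (forall f t, K f -> `|f t| / w k1 t <= M) ->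
  compact_wrt (lim_open deg om) K ->
  K `<=` ell_k k2 /\ compact_wrt (ellk_open deg om k2) K.
Proof.
move=> om_k12 KM K_compact.
have K_k1 f : K f -> ell_k k1 f by move=> Kf; apply/ell_kP; exists M => t; apply: KM.
have K_k2 f : K f -> ell_k k2 f.
  move=> /K_k1; apply: ell_k_weaker => n.
  by apply: leq_trans (om_k12 n); rewrite leq_pmull ?expn_gt0.
split=> //; apply: compact_wrt_coarser K_compact => U f [_ U_open] Kf Uf.
have [e e_gt0 ballU] := U_open f Uf.
pose N := Num.truncn (2 * M / e); pose p := sampled_sup (head_sample k2 N).
have tail_lt : 2 * M / (2 ^ N)%:R < e.
  rewrite ltr_pdivrMr ?ltr0n ?expn_gt0 // [e * _]mulrC -ltr_pdivrMr //.
  by apply: lt_le_trans (truncnS_gt _) _; rewrite ler_nat ltn_expl.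
exists [set g | ell_lim g /\ p (fsub g f) < e].
  apply: lim_open_ball (sampled_sup_seminorm (head_sample_low k2 N)) _.
  by exists k1; apply: K_k1.
split.
  split; first by exists k1; apply: K_k1.
  apply: le_lt_trans e_gt0; apply: sup_le_nonneg => // _ [s _ <-].
  by rewrite /fsub subrr normr0 mul0r.
move=> g [Kg [_ pg]]; apply: ballU; split; first exact: K_k2.
apply: le_lt_trans (wnorm_head_tail (M := 2 * M) N om_k12 _) _.
  move=> t; apply: le_trans (_ : (`|g t| + `|f t|) / w k1 t <= _).
    by rewrite ler_wpM2r ?invr_ge0 ?ler0n ?ler_normB.
  by rewrite mulrDl mulr_natl mulr2n lerD ?KM.
by rewrite gt_max pg.
Qed.

End DirectLimit.

Theorem lemmaB4 (R : realType) (B : completeNormedModType R) (J : Type)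
  (deg : J -> nat) (om : nat -> nat -> nat)
  (hom : convex_growth_family R om) (K : set (J -> B)) :
  K `<=` ell_lim deg om ->
  compact_wrt (lim_open deg om) K ->
  exists k, K `<=` ell_k deg om k /\ compact_wrt (ellk_open deg om k) K.
Proof.
move=> KL K_compact; have [[om_gt0 [_ om_leS] _ om_W3] _] := hom.
have [k1 [M KM]] := lim_compact_step_bounded om_gt0 om_leS KL K_compact.
have [k2 [_ om_k12]] := om_W3 k1.
by exists k2; apply: lim_compact_in_step om_k12 KM K_compact.
Qed.
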